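(* Let $n\ge 5$ and $M\ge1$ be integers, $U=\{0,1,\ldots,M-1\}$, and let $\phi:\binom{U}{2}\to\{\text{red},\text{blue}\}$ be a $2$-coloring such that every $n$-element subset of $U$ contains three elements $x<y<z$ with $\phi(x,y)=\phi(y,z)\ne\phi(x,z)$. Let $H=H_\phi$ be the $4$-uniform hypergraph on $V=\{0,\ldots,2^M-1\}$ defined below. Then the independence number of $H$ satisfies $\alpha(H)<2^6n^5+1$, i.e., $H$ has no independent set of size $2^6n^5+1$.
   Context: Every $a\in V=\{0,\ldots,2^M-1\}$ is written in binary as $a=\sum_{i=0}^{M-1}a(i)2^i$ with $a(i)\in\{0,1\}$. For $a\ne b$ in $V$, $\delta(a,b)$ denotes the largest index $i$ with $a(i)\ne b(i)$; thus $\delta(a,b)\in U$. For a pair $\{x,y\}$ of distinct elements of $U$ we write $\phi(x,y)=\phi(y,x)$ for its color. For a $4$-tuple $v_1<v_2<v_3<v_4$ of $V$, set $\delta_i=\delta(v_i,v_{i+1})$ for $i=1,2,3$. The $4$-tuple $\{v_1,v_2,v_3,v_4\}$ is an edge of $H$ if and only if one of the following holds: (i) $\delta_1<\delta_2<\delta_3$ or $\delta_1>\delta_2>\delta_3$, and $\phi(\delta_1,\delta_2)=\phi(\delta_2,\delta_3)\ne\phi(\delta_1,\delta_3)$; (ii) $\delta_1>\delta_2<\delta_3$, $\delta_1>\delta_3$, and $\phi(\delta_1,\delta_2)\ne\phi(\delta_2,\delta_3)$; (iii) $\delta_1>\delta_2<\delta_3$, $\delta_1<\delta_3$, and $\phi(\delta_1,\delta_2)=\phi(\delta_1,\delta_3)=\phi(\delta_2,\delta_3)$.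 An independent set of $H$ is a set of vertices containing no edge of $H$; $\alpha(H)$ is the maximum size of an independent set. *)

From mathcomp Require Import all_boot.
Set Implicit Arguments. Unset Strict Implicit. Unset Printing Implicit Defensive.

Definition bit (a i : nat) : bool := odd (a %/ 2 ^ i).

(* delta(a,b) = largest index i < M with a(i) <> b(i) (meaningful for a <> b in V) *)
Definition delta (M a b : nat) : nat :=
  \max_(i < M | bit a i != bit b i) i.

(* edge predicate of H_phi for v1 < v2 < v3 < v4 ; phi is a colouring given
   on U x U (red = true, blue = false), assumed symmetric. *)
Definition is_edge (M : nat) (phi : nat -> nat -> bool) (v1 v2 v3 v4 : nat) : bool :=
  let d1 := delta M v1 v2 in
  let d2 := delta M v2 v3 in
  let d3 := delta M v3 v4 in
  [|| (((d1 < d2) && (d2 < d3)) || ((d2 < d1) && (d3 < d2))) &&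
        ((phi d1 d2 == phi d2 d3) && (phi d2 d3 != phi d1 d3)),
      [&& d2 < d1, d2 < d3, d3 < d1 & phi d1 d2 != phi d2 d3]
    | [&& d2 < d1, d2 < d3, d1 < d3,
          phi d1 d2 == phi d1 d3 & phi d1 d3 == phi d2 d3]].

Definition independent (M : nat) (phi : nat -> nat -> bool) (S : {set 'I_(2 ^ M)}) : Prop :=
  forall v1 v2 v3 v4 : 'I_(2 ^ M),
    v1 \in S -> v2 \in S -> v3 \in S -> v4 \in S ->
    v1 < v2 -> v2 < v3 -> v3 < v4 ->
    ~~ is_edge M phi v1 v2 v3 v4.
Arguments independent : clear implicits.
Arguments is_edge : clear implicits.

(* The levels of v in S are the heights at which the binary tree
   spanned by S branches off the path to v, and the signature of v lists the bits of v at its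
   levels, from the top; distinct vertices have distinct signatures. If vertices of S branch
   off the path to v at levels e1 > e2 > e3, then two of them together with the two sides of
   the branching at e3 form a 4-tuple whose consecutive splitting levels are e1, e2, e3 in an
   order fixed by the bits of v at e1 and e2. As it is not an edge, the colours of the triangle
   e1 e2 e3 are constrained ([triangle_ok]). Hence the levels where v has a given bit contain
   no x < y < z with phi(x,y) = phi(y,z) <> phi(x,z), so there are fewer than n of them; and,
   by an exhaustive check, no seven levels carry alternating bits, so the signature without its
   last letter has at most five runs. There are at most 4 n^5 + 3 such words. *)

From mathcomp Require Import all_boot zify.
Set Implicit Arguments. Unset Strict Implicit. Unset Printing Implicit Defensive.

Lemma bit0 a : bit a 0 = odd a.
Proof. by rewrite /bit expn0 divn1. Qed.

Lemma bitS a i : bit a i.+1 = bit (a %/ 2) i.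
Proof. by rewrite /bit expnS divnMA. Qed.

Lemma bit_divX a k i : bit (a %/ 2 ^ k) i = bit a (k + i).
Proof. by rewrite /bit -divnMA -expnD. Qed.

Lemma bit_small a i : a < 2 ^ i -> bit a i = false.
Proof. by move=> a_lt; rewrite /bit divn_small. Qed.

Lemma eq_bits_lt m a b : a < 2 ^ m -> b < 2 ^ m ->
  (forall i, i < m -> bit a i = bit b i) -> a = b.
Proof.
elim: m a b => [|m IHm] a b; first by rewrite expn0 !ltnS !leqn0 => /eqP-> /eqP->.
move=> a_lt b_lt eq_ab.
have ltS x : x < 2 ^ m.+1 -> x %/ 2 < 2 ^ m by rewrite ltn_divLR // -expnSr.
have eq_half : a %/ 2 = b %/ 2.
  by apply: IHm (ltS _ a_lt) (ltS _ b_lt) _ => i lt_im; rewrite -!bitS eq_ab.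
by rewrite (divn_eq a 2) (divn_eq b 2) eq_half !modn2 -!bit0 eq_ab.
Qed.

Lemma eq_bits a b : bit a =1 bit b -> a = b.
Proof.
have lt_pow x : x <= a + b -> x < 2 ^ (a + b).
  by move=> le_x; apply: leq_trans (ltn_expl x (ltnSn 1)) _; rewrite leq_exp2l.
by move=> eq_ab; apply: (eq_bits_lt (lt_pow _ (leq_addr _ _)) (lt_pow _ (leq_addl _ _))).
Qed.

Lemma ord_seq_exists m (s : seq nat) : all (fun x => x < m) s ->
  exists2 s' : seq 'I_m, map val s' = s & size s' = size s.
Proof.
elim: s => [|x s IHs] /=; first by exists [::].
case/andP=> lt_xm /IHs[s' eq_s size_s].
by exists (Ordinal lt_xm :: s'); rewrite /= ?eq_s ?size_s.
Qed.

Definition agree_above (x y e : nat) := forall i, e < i -> bit x i = bit y i.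

(* In the binary tree of [V], the paths to [x] and [y] split at height [e]. *)
Definition splits (x y e : nat) := bit x e != bit y e /\ agree_above x y e.

Lemma ltn_agree_above a b d :
  agree_above a b d -> bit a d = false -> bit b d -> a < b.
Proof.
move=> agr ad bd.
have eq_high : a %/ 2 ^ d.+1 = b %/ 2 ^ d.+1.
  by apply: eq_bits => i; rewrite !bit_divX agr // addSn ltnS leq_addr.
have low x : x %/ 2 ^ d = x %/ 2 ^ d.+1 * 2 + bit x d.
  by rewrite {1}(divn_eq (x %/ 2 ^ d) 2) -divnMA -expnSr modn2.
have : a %/ 2 ^ d < b %/ 2 ^ d by rewrite !low eq_high ad bd addn0 addn1.
by apply: contraTT; rewrite -!leqNgt; apply: leq_div2r.
Qed.

Lemma splits_sym x y e : splits x y e -> splits y x e.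
Proof. by case=> ne agr; split=> [|i /agr //]; rewrite eq_sym. Qed.

Lemma splits_neq x y e : splits x y e -> x != y.
Proof. by case=> ne _; apply: contraNneq ne => ->. Qed.

Lemma splits_ltn x y e : splits x y e -> (x < y) = bit y e.
Proof.
move=> [ne agr].
have bx : bit x e = ~~ bit y e by move: ne; case: (bit x e); case: (bit y e).
case ye: (bit y e); rewrite ye /= in bx; first exact: ltn_agree_above agr bx ye.
apply/negbTE; rewrite -leqNgt ltnW //.
by apply: ltn_agree_above ye bx => i /agr.
Qed.

Lemma splits_uniq x y e e' : splits x y e -> splits x y e' -> e = e'.
Proof.
move=> [ne agr] [ne' agr']; case: (ltngtP e e') => // [/agr | /agr'] eq_b.
  by rewrite eq_b eqxx in ne'.
by rewrite eq_b eqxx in ne.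
Qed.

Lemma splits_trans x y z e e' :
  splits x y e -> agree_above z y e' -> e' < e -> splits x z e.
Proof.
move=> [ne agr] agr' lt_e; split; first by rewrite agr'.
by move=> i lt_i; rewrite agr ?agr' //; apply: ltn_trans lt_i.
Qed.

Lemma delta_splits M x y : x < 2 ^ M -> y < 2 ^ M -> x != y ->
  delta M x y < M /\ splits x y (delta M x y).
Proof.
move=> x_lt y_lt neq_xy.
have [i0 ne_i0] : exists i : 'I_M, bit x i != bit y i.
  apply/existsP; apply: contraNT neq_xy; rewrite negb_exists => /forallP eq_xy.
  apply/eqP; apply: (eq_bits_lt x_lt y_lt) => i lt_iM.
  by have /negPn/eqP := eq_xy (Ordinal lt_iM).
rewrite /delta (bigmax_eq_arg i0) //; case: arg_maxnP => //= j ne_j max_j.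
split=> //; split=> // i lt_ji; case: (ltnP i M) => [lt_iM | le_Mi].
  by apply/eqP; apply: contraTT lt_ji; rewrite -leqNgt => /(max_j (Ordinal lt_iM)).
have lt_pow z : z < 2 ^ M -> z < 2 ^ i by move/leq_trans; apply; rewrite leq_exp2l.
by rewrite !bit_small ?lt_pow.
Qed.

Lemma splits_delta M x y e : x < 2 ^ M -> y < 2 ^ M -> splits x y e -> delta M x y = e.
Proof.
move=> x_lt y_lt sp; have [_ sp'] := delta_splits x_lt y_lt (splits_neq sp).
exact: splits_uniq sp' sp.
Qed.

Definition edge_shape (phi : nat -> nat -> bool) (d1 d2 d3 : nat) : bool :=
  [|| (((d1 < d2) && (d2 < d3)) || ((d2 < d1) && (d3 < d2))) &&
        ((phi d1 d2 == phi d2 d3) && (phi d2 d3 != phi d1 d3)),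
      [&& d2 < d1, d2 < d3, d3 < d1 & phi d1 d2 != phi d2 d3]
    | [&& d2 < d1, d2 < d3, d1 < d3,
          phi d1 d2 == phi d1 d3 & phi d1 d3 == phi d2 d3]].

Lemma independent_splits M phi (S : {set 'I_(2 ^ M)}) (b1 b2 b3 b4 : 'I_(2 ^ M)) d1 d2 d3 :
  independent M phi S -> b1 \in S -> b2 \in S -> b3 \in S -> b4 \in S ->
  splits b1 b2 d1 -> splits b2 b3 d2 -> splits b3 b4 d3 ->
  bit b2 d1 -> bit b3 d2 -> bit b4 d3 -> ~~ edge_shape phi d1 d2 d3.
Proof.
move=> indS b1S b2S b3S b4S s1 s2 s3 o1 o2 o3.
have := indS _ _ _ _ b1S b2S b3S b4S; rewrite (splits_ltn s1) (splits_ltn s2) (splits_ltn s3).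
rewrite /is_edge (splits_delta (ltn_ord _) (ltn_ord _) s1).
rewrite (splits_delta (ltn_ord _) (ltn_ord _) s2) (splits_delta (ltn_ord _) (ltn_ord _) s3).
by apply.
Qed.

(* For levels [e3 < e2 < e1] of a vertex [v]: [l1 l2] are the bits of [v] at [e1 e2] and
   [c32 c21 c31] the colours of the pairs [{e3, e2}], [{e2, e1}], [{e3, e1}]. The three
   branches correspond to cases (i), (ii) and (iii) of the definition of an edge. *)
Definition triangle_ok (l1 l2 c32 c21 c31 : bool) :=
  if l1 == l2 then ~~ ((c32 == c21) && (c21 != c31))
  else if l1 then c32 == c31 else ~~ ((c32 == c21) && (c21 == c31)).

Definition admissible (w : seq bool) (g : nat -> nat -> bool) :=
  forall i j t, i < j -> j < t -> t < size w ->
    triangle_ok (nth false w i) (nth false w j) (g t j) (g j i) (g t i).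

Section Signature.

Variables (M : nat) (S : {set 'I_(2 ^ M)}).

Definition branches_at (v : 'I_(2 ^ M)) (e : nat) :=
  [exists u in S, (u != v) && (delta M u v == e)].

Definition levels (v : 'I_(2 ^ M)) := [seq e <- rev (iota 0 M) | branches_at v e].

Definition signature (v : 'I_(2 ^ M)) := [seq bit v e | e <- levels v].

Lemma mem_levels (v : 'I_(2 ^ M)) e : (e \in levels v) = (e < M) && branches_at v e.
Proof. by rewrite mem_filter mem_rev mem_iota andbC. Qed.

Lemma branches_atP (v : 'I_(2 ^ M)) e :
  reflect (exists2 u, u \in S & splits u v e) (branches_at v e).
Proof.
apply: (iffP existsP) => [[u /and3P[uS neq_uv /eqP <-]] | [u uS sp]].
  by exists u => //; case: (delta_splits (ltn_ord u) (ltn_ord v) neq_uv).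
exists u; rewrite uS (splits_neq sp) /=.
by rewrite (splits_delta (ltn_ord u) (ltn_ord v) sp).
Qed.

Lemma branches_at_above (u v : 'I_(2 ^ M)) d e :
  splits u v d -> d < e -> branches_at u e -> branches_at v e.
Proof.
move=> [_ agr] lt_de /branches_atP[w wS sp]; apply/branches_atP; exists w => //.
by apply: splits_trans sp _ lt_de => i /agr.
Qed.

Lemma levels_sorted v : sorted gtn (levels v).
Proof.
apply: sorted_filter; first exact: (@rev_trans _ ltn ltn_trans).
by rewrite rev_sorted; apply: iota_ltn_sorted.
Qed.

Lemma levels_uniq v : uniq (levels v).
Proof. by rewrite filter_uniq // rev_uniq iota_uniq. Qed.

Lemma levels_cat v d : d < M -> levels v =
  [seq e <- rev (iota d.+1 (M - d.+1)) | branches_at v e] ++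
  [seq e <- d :: rev (iota 0 d) | branches_at v e].
Proof.
move=> lt_dM; rewrite /levels -filter_cat -rev_rcons -rev_cat; congr (filter _ (rev _)).
by rewrite -{1}(subnKC lt_dM) iotaD add0n -addn1 iotaD cats1.
Qed.

Lemma signature_inj : {in S &, injective signature}.
Proof.
move=> u v uS vS; apply: contra_eq => neq_uv.
have [lt_dM sp] := delta_splits (ltn_ord u) (ltn_ord v) neq_uv.
set d := delta M u v in lt_dM sp.
have br_u : branches_at u d by apply/branches_atP; exists v => //; apply: splits_sym.
have br_v : branches_at v d by apply/branches_atP; exists u.
set X := [seq e <- rev (iota d.+1 (M - d.+1)) | branches_at u e].
have eq_X : [seq e <- rev (iota d.+1 (M - d.+1)) | branches_at v e] = X.
  apply: eq_in_filter => e; rewrite mem_rev mem_iota => /andP[lt_de _].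
  by apply/idP/idP; apply: branches_at_above lt_de; [apply: splits_sym | ].
have eq_bits_X : [seq bit u e | e <- X] = [seq bit v e | e <- X].
  apply/eq_in_map => e; rewrite mem_filter mem_rev mem_iota => /and3P[_ lt_de _].
  by case: sp => _ ->.
rewrite /signature !(levels_cat _ lt_dM) eq_X /= br_u br_v !map_cat eq_bits_X.
apply/negP => /eqP /(congr1 (nth false ^~ (size X))).
by rewrite !nth_cat size_map ltnn subnn /=; apply/eqP; case: sp.
Qed.

Variable phi : nat -> nat -> bool.
Hypothesis phi_sym : forall x y, x < M -> y < M -> phi x y = phi y x.
Hypothesis S_indep : independent M phi S.

Lemma split_pair_at (v : 'I_(2 ^ M)) e : v \in S -> branches_at v e ->
  exists lo hi : 'I_(2 ^ M), [/\ lo \in S, hi \in S, splits lo hi e, bit hi e &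
    agree_above lo v e /\ agree_above hi v e].
Proof.
move=> vS /branches_atP[u uS [ne agr]].
have agr' : agree_above v u e by move=> i /agr.
case ve: (bit v e).
  by exists u, v; split=> //; split.
exists v, u; split=> //; first by split; rewrite // eq_sym.
by move: ne; rewrite ve; case: (bit u e).
Qed.

Lemma levels_triangle_ok (v : 'I_(2 ^ M)) e1 e2 e3 : v \in S ->
  e1 \in levels v -> e2 \in levels v -> e3 \in levels v -> e3 < e2 -> e2 < e1 ->
  triangle_ok (bit v e1) (bit v e2) (phi e3 e2) (phi e2 e1) (phi e3 e1).
Proof.
move=> vS; rewrite !mem_levels => /andP[m1 /branches_atP[w1 w1S s1]].
move=> /andP[m2 /branches_atP[w2 w2S s2]] /andP[m3 br3] lt32 lt21.
have lt31 := ltn_trans lt32 lt21.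
have [lo [hi [loS hiS slh bhi [alo ahi]]]] := split_pair_at vS br3.
have s12 := splits_trans s1 s2.2 lt21.
have s1l := splits_trans s1 alo lt31; have s1h := splits_trans s1 ahi lt31.
have s2l := splits_trans s2 alo lt32; have s2h := splits_trans s2 ahi lt32.
have bw1 : bit w1 e1 = ~~ bit v e1 by move: s1.1; case: (bit w1 e1); case: (bit v e1).
have bw2 : bit w2 e2 = ~~ bit v e2 by move: s2.1; case: (bit w2 e2); case: (bit v e2).
have bw21 : bit w2 e1 = bit v e1 by rewrite s2.2.
rewrite (phi_sym m3 m2) (phi_sym m2 m1) (phi_sym m3 m1).
have n12 := leq_gtF (ltnW lt21); have n23 := leq_gtF (ltnW lt32).
have n13 := leq_gtF (ltnW lt31).
rewrite /triangle_ok; case E1: (bit v e1); case E2: (bit v e2) => /=; [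
  have := independent_splits S_indep w1S w2S loS hiS s12 s2l slh;
  rewrite bw21 alo // E1 E2 => /(_ isT isT bhi) |
  have := independent_splits S_indep w1S loS hiS w2S s1l slh (splits_sym s2h);
  rewrite alo // E1 bw2 E2 => /(_ isT bhi isT) |
  have := independent_splits S_indep w2S loS hiS w1S s2l slh (splits_sym s1h);
  rewrite alo // E2 bw1 E1 => /(_ isT bhi isT) |
  have := independent_splits S_indep loS hiS w2S w1S slh (splits_sym s2h) (splits_sym s12);
  rewrite bw2 E2 bw1 E1 => /(_ bhi isT isT)];
rewrite /edge_shape lt21 lt32 lt31 n12 n23 n13 /=;
rewrite ?(phi_sym m3 m2) ?(phi_sym m2 m1) ?(phi_sym m3 m1);
by case: (phi e1 e2); case: (phi e2 e3); case: (phi e1 e3).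
Qed.

Lemma signature_admissible v : v \in S ->
  admissible (signature v) (fun i j => phi (nth 0 (levels v) i) (nth 0 (levels v) j)).
Proof.
move=> vS i j t lt_ij lt_jt; rewrite size_map => lt_t.
have lt_j := ltn_trans lt_jt lt_t; have lt_i := ltn_trans lt_ij lt_j.
have decr := sorted_ltn_nth (@rev_trans _ ltn ltn_trans) 0 (levels_sorted v).
by rewrite !(nth_map 0) //; apply: levels_triangle_ok; rewrite ?mem_nth //; apply: decr.
Qed.

Variable n : nat.
Hypothesis phi_unavoidable : forall T : {set 'I_M}, #|T| = n ->
  exists x y z : 'I_M, [/\ x \in T, y \in T, z \in T & x < y < z] /\
    phi x y = phi y z /\ phi y z != phi x z.

Lemma count_signature_lt v c : v \in S -> count_mem c (signature v) < n.
Proof.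
move=> vS; rewrite ltnNge; apply/negP => le_n_count.
set s := [seq e <- levels v | bit v e == c].
have s_lt : all (fun e => e < M) s.
  by apply/allP => e; rewrite mem_filter mem_levels => /andP[_ /andP[]].
have [s' eq_s' size_s'] := ord_seq_exists s_lt.
have uniq_s' : uniq s'.
  by rewrite -(map_inj_uniq val_inj) eq_s' filter_uniq ?levels_uniq.
have size_T : #|[set x in take n s']| = n.
  rewrite cardsE (card_uniqP (take_uniq n uniq_s')) size_take size_s'.
  by rewrite size_filter; apply/minn_idPl; rewrite /signature count_map in le_n_count.
have [x [y [z [[xT yT zT /andP[lt_xy lt_yz]] [eq_xyz ne_xz]]]]] := phi_unavoidable size_T.
have in_s (a : 'I_M) : a \in [set x in take n s'] ->
    ((a : nat) \in levels v) && (bit v a == c).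
  by rewrite inE => /mem_take /(map_f val); rewrite eq_s' mem_filter andbC.
case/andP: (in_s _ xT) => xl /eqP bx; case/andP: (in_s _ yT) => yl /eqP byc.
case/andP: (in_s _ zT) => zl /eqP bz.
have := levels_triangle_ok vS zl yl xl lt_xy lt_yz.
by rewrite byc bz /triangle_ok eqxx /= eq_xyz eqxx ne_xz.
Qed.

End Signature.

Definition alt (b : bool) (i : nat) := odd i (+) b.

Fixpoint all_words (k : nat) (P : seq bool -> bool) : bool :=
  if k is k'.+1 then
    all_words k' (fun l => P (true :: l)) && all_words k' (fun l => P (false :: l))
  else P [::].

Lemma all_wordsP k P l : all_words k P -> size l = k -> P l.
Proof.
elim: k P l => [|k IHk] P [|x l] //= /andP[Pt Pf] [size_l].
by case: x; [apply: IHk Pt _ | apply: IHk Pf _].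
Qed.

Definition triangle_pairs (ts : seq (nat * nat * nat)) : seq (nat * nat) :=
  undup (flatten [seq let: (i, j, t) := x in [:: (t, j); (j, i); (t, i)] | x <- ts]).

Definition pair_indices (ps : seq (nat * nat)) (ts : seq (nat * nat * nat)) :=
  [seq let: (i, j, t) := x in (i, j, index (t, j) ps, index (j, i) ps, index (t, i) ps)
  | x <- ts].

Definition alt_constraints_ok b (cs : seq (nat * nat * nat * nat * nat)) (l : seq bool) :=
  all (fun c => let: (i, j, tj, ji, ti) := c in
         triangle_ok (alt b i) (alt b j) (nth false l tj) (nth false l ji) (nth false l ti))
      cs.

(* [ps] lists the variables [g t j] of the constraints [ts] on [i < j < t < 7], and [cs]
   is [ts] with each such variable replaced by its position in [ps]. *)
Lemma alt_constraints_unsat b ts ps cs (g : nat -> nat -> bool) :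
  all (fun x => let: (i, j, t) := x in
         [&& i < j < t, t < 7 & all (mem ps) [:: (t, j); (j, i); (t, i)]]) ts ->
  cs = pair_indices ps ts ->
  all_words (size ps) (fun l => ~~ alt_constraints_ok b cs l) ->
  ~ (forall i j t, i < j -> j < t -> t < 7 ->
       triangle_ok (alt b i) (alt b j) (g t j) (g j i) (g t i)).
Proof.
move=> ts_ok -> unsat ok_g; pose l := [seq g p.1 p.2 | p <- ps].
have g_l p : p \in ps -> nth false l (index p ps) = g p.1 p.2.
  by move=> p_ps; rewrite (nth_map (0, 0)) ?index_mem ?nth_index.
have /negP : ~~ alt_constraints_ok b (pair_indices ps ts) l := all_wordsP unsat (size_map _ _).
apply; apply/allP => _ /mapP[[[i j] t] t_ts ->].
case/and3P: (allP ts_ok _ t_ts) => /andP[lt_ij lt_jt] lt_t7 /and4P[tj ji ti _].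
by rewrite /= !g_l //; apply: ok_g.
Qed.

(* Unsatisfiable subsets of the 35 constraints of [no_alt7]; [no_alt7] checks them by
   evaluating every colouring of the pairs they involve. *)
Definition alt7_core (b : bool) : seq (nat * nat * nat) :=
  if b then
    [:: (1, 2, 4); (2, 3, 4); (0, 1, 6); (0, 5, 6); (1, 2, 6); (1, 4, 6); (2, 3, 6);
        (2, 5, 6); (3, 4, 6); (4, 5, 6)]
  else
    [:: (0, 1, 3); (1, 2, 3); (0, 1, 5); (0, 3, 5); (2, 3, 5); (3, 4, 5); (0, 1, 6);
        (0, 3, 6); (0, 5, 6); (1, 2, 6); (1, 4, 6); (1, 5, 6); (2, 3, 6); (2, 5, 6);
        (3, 4, 6); (3, 5, 6); (4, 5, 6)].

Lemma no_alt7 b (g : nat -> nat -> bool) :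
  ~ (forall i j t, i < j -> j < t -> t < 7 ->
       triangle_ok (alt b i) (alt b j) (g t j) (g j i) (g t i)).
Proof.
have := @alt_constraints_unsat b (alt7_core b) (triangle_pairs (alt7_core b))
  (pair_indices (triangle_pairs (alt7_core b)) (alt7_core b)) g.
by case: b; set cs := pair_indices _ _; vm_compute in cs; apply; vm_compute.
Qed.

Fixpoint has_alt (s : seq bool) (k : nat) (b : bool) : bool :=
  if k is k'.+1 then
    if s is c :: s' then ((c == b) && has_alt s' k' (~~ b)) || has_alt s' k b else false
  else true.

Lemma has_alt0 s b : has_alt s 0 b.
Proof. by case: s. Qed.

Lemma has_alt_indices s k b : has_alt s k b ->
  exists idx : seq nat, [/\ size idx = k, sorted ltn idx, all (gtn (size s)) idx &
    forall m, m < k -> nth false s (nth 0 idx m) = alt b m].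
Proof.
elim: s k b => [|c s IHs] [|k] b //=; try by exists [::].
case/orP => [/andP[/eqP <- /IHs[idx [size_idx sorted_idx lt_idx nth_idx]]] | /IHs].
  exists (0 :: map S idx); split=> /=; first by rewrite size_map size_idx.
  - by rewrite path_min_sorted ?sorted_map //; apply/allP => x /mapP[y _ ->].
  - by rewrite all_map; apply: sub_all lt_idx => x /=.
  case=> [|m] lt_m /=; first by rewrite /alt addFb.
  by rewrite (nth_map 0) ?size_idx //= nth_idx // /alt /= addbN addNb.
case=> idx [size_idx sorted_idx lt_idx nth_idx]; exists (map S idx); split.
- by rewrite size_map.
- by rewrite sorted_map.
- by rewrite all_map; apply: sub_all lt_idx => x /=.
by move=> m lt_m; rewrite (nth_map 0) ?size_idx //= nth_idx.
Qed.

(* The last letter is excluded: the letter at the third index [t] of a triangle is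
   unconstrained. *)
Lemma admissible_no_alt w g b : admissible w g -> ~~ has_alt (take (size w).-1 w) 6 b.
Proof.
move=> adm; apply/negP => /has_alt_indices[idx [size_idx sorted_idx lt_idx nth_idx]].
set T := (size w).-1 in lt_idx nth_idx.
have idx_lt m : m < 6 -> nth 0 idx m < T.
  rewrite -size_idx => /(mem_nth 0)/(allP lt_idx)/= lt_size.
  by apply: leq_trans lt_size _; rewrite size_take; case: ltnP => // /ltnW.
have lt_Tw : T < size w by move: (idx_lt 0 isT); rewrite /T; case: (size w).
pose f := nth 0 (rcons idx T).
have f_lt m : m < 6 -> f m = nth 0 idx m by move=> lt_m; rewrite /f nth_rcons size_idx lt_m.
have f6 : f 6 = T by rewrite /f nth_rcons size_idx.
have f_mono a c : a < c -> c < 7 -> f a < f c.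
  move=> lt_ac; rewrite ltnS leq_eqVlt => /orP[/eqP eq_c | lt_c6].
    by move: lt_ac; rewrite eq_c f6 => lt_a6; rewrite f_lt ?idx_lt.
  have lt_a6 := ltn_trans lt_ac lt_c6.
  by rewrite !f_lt //; apply: (sorted_ltn_nth ltn_trans) => //; rewrite ?inE size_idx.
have f_le_T m : m < 7 -> f m <= T.
  by rewrite ltnS leq_eqVlt => /orP[/eqP -> | lt_m]; rewrite ?f6 // ltnW ?f_lt ?idx_lt.
have w_f m : m < 6 -> nth false w (f m) = alt b m.
  by move=> lt_m; rewrite -nth_idx // f_lt // nth_take ?idx_lt.
apply: (no_alt7 (b := b) (g := fun a c => g (f a) (f c))) => i j t lt_ij lt_jt lt_t7.
have lt_j6 : j < 6 := leq_ltn_trans lt_jt lt_t7.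
rewrite -w_f ?(ltn_trans lt_ij) // -w_f //.
apply: adm; rewrite ?f_mono ?(leq_ltn_trans (f_le_T _ lt_t7)) //.
exact: ltn_trans lt_jt lt_t7.
Qed.

Fixpoint runs (c : bool) (rs : seq nat) : seq bool :=
  if rs is r :: rs' then nseq r c ++ runs (~~ c) rs' else [::].

Lemma runs_nseq0 k c : runs c (nseq k 0) = [::].
Proof. by elim: k c => //= k IHk c; rewrite IHk. Qed.

Lemma runs_of_no_alt k b s : ~~ has_alt s k.+1 b ->
  exists2 rs, size rs = k.+1 & s = runs (~~ b) rs.
Proof.
elim: k b s => [|k IHk] b s.
  move=> no_b; exists [:: size s]; rewrite //= cats0.
  elim: s no_b => //= c s IHs; rewrite has_alt0 andbT negb_or => /andP[ne_cb /IHs {1}->].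
  by congr (_ :: _); move: ne_cb; case: c; case: (b).
elim: s => [|c s IHs]; first by exists (nseq k.+2 0); rewrite ?size_nseq ?runs_nseq0.
rewrite /= negb_or => /andP[no_c no_s].
case: (eqVneq c b) no_c => [-> /= no_tail | ne_cb _].
  have [[|r rs] //= size_rs ->] := IHk (~~ b) s no_tail.
  by exists (0 :: r.+1 :: rs); rewrite /= ?size_rs ?negbK.
have [[|r rs] //= size_rs ->] := IHs no_s.
exists (r.+1 :: rs) => //=; congr (_ :: _).
by move: ne_cb; case: c; case: (b).
Qed.

Lemma runs_le_count c rs r : r \in rs ->
  r <= maxn (count_mem true (runs c rs)) (count_mem false (runs c rs)).
Proof.
elim: rs c => //= r' rs IHrs c; rewrite inE => /predU1P[-> | r_rs].
  have : r' <= count_mem c (nseq r' c ++ runs (~~ c) rs).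
    by rewrite count_cat count_nseq /= eqxx mul1n leq_addr.
  by rewrite leq_max; case: c => ->; rewrite ?orbT.
apply: leq_trans (IHrs (~~ c) r_rs) _.
by rewrite !count_cat geq_max !leq_max !leq_addl ?orbT.
Qed.

(* [Some (Some (c, rs), l)] codes [c] followed by five runs of lengths [rs] starting with
   [c], then the last letter [l]. *)
Definition code n := option (option (bool * 5.-tuple 'I_n) * bool).

Definition decode n (x : code n) : seq bool :=
  match x with
  | None => [::]
  | Some (None, l) => [:: l]
  | Some (Some (c, rs), l) => rcons (c :: runs c (map val rs)) l
  end.

Lemma card_code n : #|{: code n}| = 4 * n ^ 5 + 3.
Proof.
by rewrite card_option card_prod card_option card_prod card_tuple !card_bool card_ord; lia.
Qed.

Lemma admissible_code n w g : admissible w g ->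
  count_mem true w < n -> count_mem false w < n -> exists x : code n, decode x = w.
Proof.
case/lastP: w => [|u l] adm lt_true lt_false; first by exists None.
have := admissible_no_alt _ adm; rewrite size_rcons /= -cats1 take_size_cat // => no_alt.
case: u => [|c u] in adm lt_true lt_false no_alt *; first by exists (Some (None, l)).
have no_alt5 : ~~ has_alt u 5 (~~ c) by apply: contra (no_alt c) => alt5; rewrite /= eqxx alt5.
have [rs size_rs u_rs] := runs_of_no_alt no_alt5; rewrite negbK in u_rs.
have rs_lt : all (fun r => r < n) rs.
  apply/allP => r /(runs_le_count c); rewrite -u_rs => le_r.
  apply: leq_ltn_trans le_r _; rewrite gtn_max.
  move: lt_true lt_false; rewrite -cats1 /= !count_cat /=; lia.
have [s' eq_s' size_s'] := ord_seq_exists rs_lt.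
have size5 : size s' == 5 by rewrite size_s' size_rs.
by exists (Some (Some (c, Tuple size5), l)); rewrite /= -cats1 u_rs -eq_s'.
Qed.

Lemma leq_card_in_decode (T U : finType) (X : eqType) (A : {pred T})
    (f : T -> X) (dec : U -> X) :
  {in A &, injective f} -> {in A, forall a, exists u, dec u = f a} -> #|A| <= #|U|.
Proof.
move=> f_inj f_dec; case: (pickP A) => [a0 a0A | A0]; last by rewrite eq_card0.
have [u0 _] := f_dec a0 a0A.
pose h a := odflt u0 [pick u | dec u == f a].
have dec_h a : a \in A -> dec (h a) = f a.
  move=> aA; rewrite /h; case: pickP => [u /eqP // | none].
  by have [u dec_u] := f_dec a aA; move: (none u); rewrite dec_u eqxx.
apply: (@leq_card_in _ _ h) => a b aA bA eq_h.
by apply: f_inj; rewrite // -!dec_h ?eq_h.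
Qed.

Theorem mainTheorem4 (n M : nat) (phi : nat -> nat -> bool) :
  5 <= n -> 1 <= M ->
  (forall x y, x < M -> y < M -> phi x y = phi y x) ->
  (forall S : {set 'I_M}, #|S| = n ->
     exists x y z : 'I_M, [/\ x \in S, y \in S, z \in S & x < y < z] /\
       phi x y = phi y z /\ phi y z != phi x z) ->
  forall S : {set 'I_(2 ^ M)}, independent M phi S ->
    #|S| < 2 ^ 6 * n ^ 5 + 1.
Proof.
move=> le5n _ phi_sym phi_unavoidable S S_indep.
have coded v : v \in S -> exists x : code n, decode x = signature S v.
  move=> vS; apply: admissible_code (signature_admissible phi_sym S_indep vS) _ _.
    exact: (count_signature_lt phi_sym S_indep phi_unavoidable).
  exact: (count_signature_lt phi_sym S_indep phi_unavoidable).
have := leq_card_in_decode (@signature_inj M S) coded; rewrite card_code.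
have : 0 < n ^ 5 by rewrite expn_gt0 (leq_trans _ le5n).
lia.
Qed.
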